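(* Let $N$ be a natural number, $P=\{a\subseteq N: |a|\geq 2\}$, and let $\|\cdot\|_3$ be the graph coloring norm on subsets of $P$ (defined in the context). Let $k\geq 1$ and let $A\subseteq P$ satisfy $\|A\|_3=k$. Then $|A|\geq\binom{2^{k-1}+1}{2}$.
   Context: $N=\{0,\ldots,N-1\}$. For $A\subseteq P$ and $z\subseteq N$ let $A\restriction z=\{a\in A: a\subseteq z\}$. The relation ''$\|A\|_3\geq m$'' is defined recursively: $\|A\|_3\geq 0$ always; $\|A\|_3\geq 1$ iff $A\neq\emptyset$; for $m\geq 1$, $\|A\|_3\geq m+1$ iff for every $z\subseteq N$ either $\|A\restriction z\|_3\geq m$ or $\|A\restriction(N\setminus z)\|_3\geq m$. Then $\|A\|_3$ is the largest $m$ with $\|A\|_3\geq m$. *)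

From mathcomp Require Import all_boot.
Set Implicit Arguments. Unset Strict Implicit. Unset Printing Implicit Defensive.

Definition Ppairs (N : nat) : {set {set 'I_N}} := [set a : {set 'I_N} | 2 <= #|a|].

Definition restr (N : nat) (A : {set {set 'I_N}}) (z : {set 'I_N}) : {set {set 'I_N}} :=
  [set a in A | a \subset z].

(* norm3_ge m A  <=>  ||A||_3 >= m  (recursive definition from the paper) *)
Fixpoint norm3_ge (N : nat) (m : nat) (A : {set {set 'I_N}}) : bool :=
  match m with
  | 0 => true
  | 1 => A != set0
  | m'.+1 => [forall z : {set 'I_N}, norm3_ge m' (restr A z) || norm3_ge m' (restr A (~: z))]
  end.

Definition norm3_eq (N : nat) (A : {set {set 'I_N}}) (k : nat) : Prop :=
  norm3_ge k A /\ forall m, norm3_ge m A -> m <= k.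

From mathcomp Require Import all_boot.
From mathcomp Require Import zify.
From Stdlib Require Import Classical Wf_nat.
Set Implicit Arguments. Unset Strict Implicit. Unset Printing Implicit Defensive.

(* Read A as a hypergraph on N and colour its vertices so that no edge is
   monochromatic.  Given such a colouring with 2^m colours, cutting N into the
   lower and the upper half of the colours and recolouring each half with
   2^(m-1) colours shows by induction that ||A||_3 <= m; hence ||A||_3 >= k
   forces the chromatic number c of A above 2^(k-1).  Conversely, if c colours are needed,
   then merging any two colours i < j must create a monochromatic edge, so some
   edge of A is coloured exactly {i, j}; these edges are pairwise distinct,
   whence |A| >= C(c, 2). *)

Section Colorings.

Variable N : nat.
Implicit Types (A : {set {set 'I_N}}) (f g : 'I_N -> nat).

Definition proper_coloring A f :=
  forall a, a \in A -> exists x y, [/\ x \in a, y \in a & f x != f y].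

Definition colors_below f c := forall x, f x < c.

Definition colorable A c := exists2 f, colors_below f c & proper_coloring A f.

Lemma colorable_leq A c d : c <= d -> colorable A c -> colorable A d.
Proof. by move=> le_cd [f fc fA]; exists f => // x; apply: leq_trans (fc x) le_cd. Qed.

Lemma proper_coloring_restr A (z : {set 'I_N}) f g :
  proper_coloring A f -> {in z &, forall x y, g x = g y -> f x = f y} ->
  proper_coloring (restr A z) g.
Proof.
move=> fA inj_g a; rewrite inE => /andP [/fA [x [y [xa ya fxy]]] sub_az].
have [xz yz] := (subsetP sub_az x xa, subsetP sub_az y ya).
by exists x, y; split => //; apply: contra_neq fxy; apply: inj_g.
Qed.

Lemma colorable_norm3_lt m A : colorable A (2 ^ m) -> ~~ norm3_ge m.+1 A.
Proof.
elim: m A => [|m IHm] A [f fc fA].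
  rewrite /= negbK; apply/eqP/setP => a; rewrite in_set0.
  apply/negP => /fA [x [y [_ _]]].
  by have := fc x; have := fc y; rewrite expn0; lia.
pose low := [set x | f x < 2 ^ m].
pose g x := f x %% 2 ^ m.
have gc : colors_below g (2 ^ m) by move=> x; rewrite ltn_pmod ?expn_gt0.
have fc' x : f x < 2 * 2 ^ m by rewrite -expnS fc.
apply/forallPn; exists low; rewrite negb_or; apply/andP; split.
  apply: IHm; exists g => //; apply: proper_coloring_restr fA _ => x y.
  by rewrite !inE /g => fx fy; rewrite !modn_small.
apply: IHm; exists g => //; apply: proper_coloring_restr fA _ => x y.
rewrite !inE -!leqNgt /g => fx fy.
have upper w : 2 ^ m <= f w -> f w %% 2 ^ m = f w - 2 ^ m.
  by move=> fw; rewrite -{1}(subnK fw) modnDr modn_small //; have := fc' w; lia.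
by rewrite !upper //; lia.
Qed.

Section MergeColors.

Variables (i j : nat) (f : 'I_N -> nat).
Hypothesis lt_ij : i < j.

Definition merge_colors x :=
  if f x == j then i else if j < f x then (f x).-1 else f x.

Lemma merge_colors_below c : j < c -> colors_below f c -> colors_below merge_colors c.-1.
Proof.
move=> jc fc x; have := fc x; rewrite /merge_colors.
by case: (f x =P j); case: (ltnP j (f x)); lia.
Qed.

Lemma merge_colors_eq x y :
  (merge_colors x == merge_colors y) =
  (f x == f y) || ((f x \in [:: i; j]) && (f y \in [:: i; j])).
Proof.
rewrite !inE /merge_colors.
by case: (f x =P j); case: (f y =P j); case: (ltnP j (f x)); case: (ltnP j (f y)); lia.
Qed.

Lemma merge_colors_proper A :
  proper_coloring A f ->
  (forall a, a \in A -> exists2 w, w \in a & f w \notin [:: i; j]) ->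
  proper_coloring A merge_colors.
Proof.
move=> fA outside a aA; have [x [y [xa ya fxy]]] := fA _ aA.
have [mxy|] := eqVneq (merge_colors x) (merge_colors y); last by exists x, y.
move: mxy => /eqP; rewrite merge_colors_eq (negbTE fxy) /= => /andP [fx _].
have [w wa fw] := outside a aA; exists w, x; split => //.
by rewrite merge_colors_eq (negbTE fw) /= orbF; apply: contraNneq fw => ->.
Qed.

End MergeColors.

Lemma bin2_leq_card_pair_images (aT T : finType) (h : aT -> {set T}) (A : {set aT}) :
  (forall x y : T, x != y -> [set x; y] \in h @: A) -> 'C(#|T|, 2) <= #|A|.
Proof.
move=> pairs; rewrite -card_draws; apply: leq_trans (leq_imset_card h A).
apply/subset_leq_card/subsetP => s; rewrite inE => /cards2P [x [y [xy ->]]].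
exact: pairs.
Qed.

Section MinimalColoring.

Variables (A : {set {set 'I_N}}) (c : nat) (f : 'I_N -> nat).
Hypotheses (fc : colors_below f c) (fA : proper_coloring A f)
           (not_fewer : ~ colorable A c.-1).

Let color x : 'I_c := Ordinal (fc x).

Lemma min_coloring_pair_edge (i j : 'I_c) :
  i < j -> [set i; j] \in [set color @: a | a : {set 'I_N} in A].
Proof.
move=> lt_ij; apply/imsetP.
have : [exists a in A, [forall w in a, f w \in [:: val i; val j]]].
  apply: contraT => /exists_inPn no_edge.
  case: not_fewer; exists (merge_colors i j f); first exact: merge_colors_below.
  apply: merge_colors_proper => // a aA.
  by move/forall_inPn: (no_edge a aA) => [w wa fw]; exists w.
case/exists_inP => a aA /forall_inP in_ij.
exists a => //; have [x [y [xa ya fxy]]] := fA aA.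
have sub_ij : color @: a \subset [set i; j].
  apply/subsetP => _ /imsetP [w wa ->].
  by have := in_ij w wa; rewrite !inE -!val_eqE.
apply/eqP; rewrite eq_sym eqEcard sub_ij cards2 -val_eqE (ltn_eqF lt_ij) /=.
apply: leq_trans (subset_leq_card (_ : [set color x; color y] \subset _)).
  by rewrite cards2 -val_eqE /= fxy.
by apply/subsetP => w; rewrite !inE => /orP [] /eqP ->; apply: imset_f.
Qed.

Lemma min_coloring_bin2_leq_card : 'C(c, 2) <= #|A|.
Proof.
rewrite -[c in 'C(c, _)]card_ord.
apply: bin2_leq_card_pair_images => x y; rewrite neq_ltn => /orP [] lt_xy.
  exact: min_coloring_pair_edge.
by rewrite setUC; apply: min_coloring_pair_edge.
Qed.

End MinimalColoring.

Lemma Ppairs_colorable A : A \subset Ppairs N -> colorable A N.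
Proof.
move=> AP; exists val => [x|a /(subsetP AP)]; first exact: ltn_ord.
rewrite inE => /card_gt1P [x [y [xa ya xy]]].
by exists x, y; split; rewrite // val_eqE.
Qed.

End Colorings.

Theorem theorem5p36 (N k : nat) (A : {set {set 'I_N}}) :
  1 <= k -> A \subset Ppairs N -> norm3_eq A k ->
  'C(2 ^ (k - 1) + 1, 2) <= #|A|.
Proof.
case: k => // m _ AP [normA _].
have [c [[[f fc fA] min_c] _]] :=
  dec_inh_nat_subset_has_unique_least_element (colorable A)
    (fun n => classic _) (ex_intro _ N (Ppairs_colorable AP)).
have lt_mc : 2 ^ m < c.
  rewrite ltnNge; apply: contraL normA => le_c.
  by apply: colorable_norm3_lt; apply: colorable_leq le_c _; exists f.
have not_fewer : ~ colorable A c.-1.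
  by move=> /min_c /leP; have := leq_ltn_trans (leq0n _) lt_mc; lia.
rewrite subn1 addn1 /=.
exact: leq_trans (leq_bin2l _ lt_mc) (min_coloring_bin2_leq_card fc fA not_fewer).
Qed.
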